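(* Let $\Gamma$ be a hyperbolic group whose elliptic (i.e. finite) subgroups are abelian. The following are equivalent: (1) every maximal elliptic subgroup of $\Gamma$ is malnormal; (2) no non-trivial elliptic subgroup of $\Gamma$ is normalised by a loxodromic (i.e. infinite order) element.
   Context: A subgroup $H\le\Gamma$ is malnormal if $H\cap gHg^{-1}=\{1\}$ for every $g\in\Gamma\setminus H$. Elliptic and loxodromic refer to the action of $\Gamma$ on a Cayley graph (elliptic subgroups are the finite subgroups, loxodromic elements are the infinite order elements). *)

From Stdlib Require Import List ZArith Lia.
Import ListNotations.
Set Implicit Arguments.

Record group := Group {
  carrier :> Type;
  mul : carrier -> carrier -> carrier;
  one : carrier;
  inv : carrier -> carrier;
  mulA : forall x y z, mul x (mul y z) = mul (mul x y) z;
  mul1g : forall x, mul one x = x;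
  mulg1 : forall x, mul x one = x;
  mulVg : forall x, mul (inv x) x = one;
  mulgV : forall x, mul x (inv x) = one
}.
Arguments mul {g} _ _.
Arguments one {g}.
Arguments inv {g} _.

Section Defs.
Variable G : group.

Fixpoint gpow (x : G) (n : nat) : G :=
  match n with O => one | S k => mul x (gpow x k) end.

Definition conj (g h : G) : G := mul (mul g h) (inv g).

Definition word_prod (w : list G) : G := fold_right (fun a b => mul a b) one w.

Definition letter (S : list G) (a : G) : Prop := In a S \/ exists s, In s S /\ a = inv s.

Definition has_word_of_length (S : list G) (g : G) (n : nat) : Prop :=
  exists w : list G, Forall (letter S) w /\ word_prod w = g /\ length w = n.

Definition generates (S : list G) : Prop :=
  forall g : G, exists n, has_word_of_length S g n.

(* n is the word-metric distance d_S(x,y) = |x^-1 y|_S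
   (= the graph distance between vertices x, y in the Cayley graph). *)
Definition word_dist (S : list G) (x y : G) (n : nat) : Prop :=
  has_word_of_length S (mul (inv x) y) n /\
  forall m, has_word_of_length S (mul (inv x) y) m -> n <= m.

(* Gromov four-point condition (doubled Gromov products, to stay integral):
   (x|y)_w >= min((x|z)_w, (y|z)_w) - delta. *)
Definition gromov_hyperbolic_metric (S : list G) (delta : nat) : Prop :=
  forall (x y z w : G) (dxw dyw dzw dxy dxz dyz : nat),
    word_dist S x w dxw -> word_dist S y w dyw -> word_dist S z w dzw ->
    word_dist S x y dxy -> word_dist S x z dxz -> word_dist S y z dyz ->
    (Z.of_nat dxw + Z.of_nat dyw - Z.of_nat dxy + 2 * Z.of_nat delta >=
     Z.min (Z.of_nat dxw + Z.of_nat dzw - Z.of_nat dxz)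
           (Z.of_nat dyw + Z.of_nat dzw - Z.of_nat dyz))%Z.

Definition hyperbolic_group : Prop :=
  exists (S : list G) (delta : nat), generates S /\ gromov_hyperbolic_metric S delta.

Definition subgroup (H : G -> Prop) : Prop :=
  H one /\ (forall x y, H x -> H y -> H (mul x y)) /\ (forall x, H x -> H (inv x)).

Definition finite_set (H : G -> Prop) : Prop :=
  exists l : list G, forall x, H x -> In x l.

Definition elliptic_subgroup (H : G -> Prop) : Prop := subgroup H /\ finite_set H.

Definition abelian_set (H : G -> Prop) : Prop :=
  forall x y, H x -> H y -> mul x y = mul y x.

Definition maximal_elliptic (H : G -> Prop) : Prop :=
  elliptic_subgroup H /\
  forall K, elliptic_subgroup K -> (forall x, H x -> K x) -> forall x, K x -> H x.

Definition malnormal (H : G -> Prop) : Prop :=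
  forall g, ~ H g -> forall y, H y -> (exists h, H h /\ y = conj g h) -> y = one.

Definition normalises (g : G) (H : G -> Prop) : Prop :=
  (forall h, H h -> H (conj g h)) /\ (forall y, H y -> exists h, H h /\ y = conj g h).

Definition loxodromic (g : G) : Prop := forall n, 0 < n -> gpow g n <> one.

Definition nontrivial (H : G -> Prop) : Prop := exists h, H h /\ h <> one.

End Defs.

Arguments subgroup {G} H.
Arguments finite_set {G} H.
Arguments elliptic_subgroup {G} H.
Arguments abelian_set {G} H.
Arguments maximal_elliptic {G} H.
Arguments malnormal {G} H.
Arguments normalises {G} g H.
Arguments loxodromic {G} g.
Arguments nontrivial {G} H.

From Stdlib Require Import List ZArith Lia Arith Wf_nat Classical ClassicalEpsilon.
Import ListNotations.

(* (1) => (2): in a delta-hyperbolic group every finite subgroup has a quasi-centre,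
   so it is conjugate into a fixed ball; hence finite subgroups have bounded order and
   each lies in a maximal one, M say.  A loxodromic g normalising a nontrivial H <= M
   is not in M, and for 1 <> h in H the element g h g^-1 lies in M and in g M g^-1.

   (2) => (1): let 1 <> y = g h g^-1 with y, h in M maximal and g not in M.  An
   infinite centraliser of y would contain a loxodromic element (pigeonhole along a
   long geodesic), which normalises <y>; so C(y) is finite, and since M is abelian,
   M = C(y).  Conjugation by g maps M into C(y) = M, so g normalises M; by (2) g has
   finite order, and then M<g> is a finite subgroup, forcing g in M. *)

Arguments mulA {g} x y z.
Arguments mul1g {g} x.
Arguments mulg1 {g} x.
Arguments mulVg {g} x.
Arguments mulgV {g} x.
Arguments gpow {G} x n.
Arguments conj {G} g h.
Arguments word_prod {G} w.
Arguments letter {G} S a.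
Arguments has_word_of_length {G} S g n.
Arguments word_dist {G} S x y n.

Section GroupFacts.
Context {G : group}.
Implicit Types x y z g h : G.

Lemma mulKg x y : mul (inv x) (mul x y) = y.
Proof. rewrite mulA, mulVg, mul1g; reflexivity. Qed.

Lemma mulKVg x y : mul x (mul (inv x) y) = y.
Proof. rewrite mulA, mulgV, mul1g; reflexivity. Qed.

Lemma mulgK x y : mul (mul y x) (inv x) = y.
Proof. rewrite <- mulA, mulgV, mulg1; reflexivity. Qed.

Lemma mulgKV x y : mul (mul y (inv x)) x = y.
Proof. rewrite <- mulA, mulVg, mulg1; reflexivity. Qed.

Lemma mulgI x y z : mul x y = mul x z -> y = z.
Proof. intro E. rewrite <- (mulKg x y), <- (mulKg x z), E; reflexivity. Qed.

Lemma mulIg x y z : mul y x = mul z x -> y = z.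
Proof. intro E. rewrite <- (mulgK x y), <- (mulgK x z), E; reflexivity. Qed.

Lemma invg_unique x y : mul x y = one -> inv x = y.
Proof. intro E. rewrite <- (mulKg x y), E, mulg1; reflexivity. Qed.

Lemma invgK x : inv (inv x) = x.
Proof. apply invg_unique, mulVg. Qed.

Lemma invg1 : inv (@one G) = one.
Proof. apply invg_unique, mul1g. Qed.

Lemma invMg x y : inv (mul x y) = mul (inv y) (inv x).
Proof. apply invg_unique. rewrite <- mulA, (mulA y), mulgV, mul1g, mulgV; reflexivity. Qed.

Lemma expgD x m n : gpow x (m + n) = mul (gpow x m) (gpow x n).
Proof. induction m; simpl; [rewrite mul1g | rewrite IHm, mulA]; reflexivity. Qed.

Lemma expgM_eq1 x n k : gpow x n = one -> gpow x (n * k) = one.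
Proof.
  intro E. induction k; [rewrite Nat.mul_0_r; reflexivity|].
  rewrite Nat.mul_succ_r, expgD, IHk, E, mulg1; reflexivity.
Qed.

Lemma expg_mod x n k : gpow x n = one -> n <> 0 -> gpow x k = gpow x (k mod n).
Proof.
  intros E Hn. rewrite (Nat.div_mod k n Hn) at 1.
  rewrite expgD, expgM_eq1, mul1g by exact E; reflexivity.
Qed.

Lemma invg_expg x n k : 0 < n -> gpow x n = one -> inv (gpow x k) = gpow x (k * (n - 1)).
Proof.
  intros Hn E. apply invg_unique. rewrite <- expgD.
  replace (k + k * (n - 1)) with (n * k) by nia. apply expgM_eq1, E.
Qed.

Lemma commute_expg x y k : mul x y = mul y x -> mul x (gpow y k) = mul (gpow y k) x.
Proof.
  intro C. induction k; simpl; [rewrite mul1g, mulg1; reflexivity|].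
  rewrite mulA, C, <- mulA, IHk, mulA; reflexivity.
Qed.

Lemma conjM g x y : mul (conj g x) (conj g y) = conj g (mul x y).
Proof. unfold conj. rewrite <- !mulA, mulKg; reflexivity. Qed.

Lemma conj_inj g x y : conj g x = conj g y -> x = y.
Proof. unfold conj. intro E. apply mulIg, mulgI in E; exact E. Qed.

Lemma conj_eq1 g x : conj g x = one -> x = one.
Proof. intro E. apply (conj_inj g). rewrite E. unfold conj. rewrite mulg1, mulgV; reflexivity. Qed.

End GroupFacts.

Lemma nat_least (P : nat -> Prop) n0 : P n0 -> exists n, P n /\ forall m, P m -> n <= m.
Proof.
  intro Pn0.
  destruct (dec_inh_nat_subset_has_unique_least_element P (fun n => classic (P n))
              (ex_intro _ n0 Pn0)) as [n [[Pn Hn] _]].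
  exists n; split; assumption.
Qed.

Lemma nat_greatest (P : nat -> Prop) B n0 :
  (forall n, P n -> n <= B) -> P n0 -> exists n, P n /\ forall m, P m -> m <= n.
Proof.
  intros HB Pn0.
  destruct (nat_least (fun k => exists n, P n /\ k = B - n) (B - n0))
    as [k [[n [Pn ->]] Hk]]; [eauto|].
  exists n; split; [exact Pn|].
  intros m Pm. assert (B - n <= B - m) by (apply Hk; eauto).
  pose proof (HB n Pn). pose proof (HB m Pm). lia.
Qed.

Lemma pigeonhole_nat {A : Type} (f : nat -> A) (l : list A) B :
  length l <= B -> (forall k, k <= B -> In (f k) l) ->
  exists i j, i < j <= B /\ f i = f j.
Proof.
  intros Hl Hf. apply NNPP. intro Inj.
  assert (ND : NoDup (map f (seq 0 (S B)))).
  { apply NoDup_map_NoDup_ForallPairs; [|apply seq_NoDup].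
    intros a b Ia Ib E. apply in_seq in Ia, Ib.
    destruct (lt_eq_lt_dec a b) as [[lt | eq] | gt]; [| exact eq |];
      exfalso; apply Inj; [exists a, b | exists b, a]; split; auto; lia. }
  apply NoDup_incl_length with (l' := l) in ND.
  - rewrite length_map, length_seq in ND. lia.
  - intros x Ix. apply in_map_iff in Ix as [k [<- Ik]]. apply in_seq in Ik. apply Hf. lia.
Qed.

Section FiniteSubgroups.
Context {G : group}.
Implicit Types (K M : G -> Prop) (x y g : G).

Definition centraliser y : G -> Prop := fun x => mul x y = mul y x.

Lemma finite_set_enum K : finite_set K -> exists l, NoDup l /\ forall x, In x l <-> K x.
Proof.
  intros [l Hl].
  set (inK := fun x => if excluded_middle_informative (K x) then true else false).
  exists (nodup (fun x y => excluded_middle_informative (x = y)) (filter inK l)).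
  split; [apply NoDup_nodup|]. intro x.
  rewrite nodup_In, filter_In. unfold inK.
  destruct (excluded_middle_informative (K x)) as [Kx | nKx]; split.
  - intros _; exact Kx.
  - intros _; split; [apply Hl, Kx | reflexivity].
  - intros [_ E]; discriminate E.
  - intro Kx; contradiction.
Qed.

Lemma subgroup_expg K x n : subgroup K -> K x -> K (gpow x n).
Proof. intros [K1 [KM _]] Kx. induction n; simpl; auto. Qed.

Lemma loxodromic_expg_inj x i j : loxodromic x -> gpow x i = gpow x j -> i = j.
Proof.
  intro L.
  assert (Shift : forall i k, gpow x i = gpow x (i + k) -> k = 0).
  { intros i' k E. rewrite expgD, <- (mulg1 (gpow x i')) in E at 1. apply mulgI in E.
    destruct k; [reflexivity|]. exfalso. apply (L (S k)); [lia | auto]. }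
  intro E. destruct (le_gt_dec i j).
  - replace j with (i + (j - i)) in E by lia. apply Shift in E. lia.
  - replace i with (j + (i - j)) in E by lia. symmetry in E. apply Shift in E. lia.
Qed.

Lemma elliptic_not_loxodromic K x : elliptic_subgroup K -> K x -> ~ loxodromic x.
Proof.
  intros [SK [l Hl]] Kx L.
  assert (ND : NoDup (map (gpow x) (seq 0 (S (length l))))).
  { apply NoDup_map_NoDup_ForallPairs; [|apply seq_NoDup].
    intros i j _ _. apply loxodromic_expg_inj, L. }
  apply NoDup_incl_length with (l' := l) in ND.
  - rewrite length_map, length_seq in ND. lia.
  - intros y Hy. apply in_map_iff in Hy as [n [<- _]]. apply Hl, subgroup_expg; assumption.
Qed.

Lemma not_loxodromic_order x : ~ loxodromic x -> exists n, 0 < n /\ gpow x n = one.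
Proof.
  intro NL. apply NNPP. intro C. apply NL. intros n Hn E. apply C. eauto.
Qed.

Lemma cyclic_elliptic y n : 0 < n -> gpow y n = one ->
  elliptic_subgroup (fun x => exists k, x = gpow y k).
Proof.
  intros Hn E. split; [split; [|split]|].
  - exists 0; reflexivity.
  - intros a b [i ->] [j ->]. exists (i + j). symmetry; apply expgD.
  - intros a [k ->]. exists (k * (n - 1)). apply invg_expg; assumption.
  - exists (map (gpow y) (seq 0 n)). intros x [k ->].
    rewrite (expg_mod y n k E) by lia. apply in_map, in_seq.
    pose proof (Nat.mod_upper_bound k n). lia.
Qed.

Lemma centraliser_subgroup y : subgroup (centraliser y).
Proof.
  unfold centraliser. split; [|split].
  - rewrite mul1g, mulg1; reflexivity.
  - intros a b Ha Hb. rewrite <- mulA, Hb, mulA, Ha, mulA; reflexivity.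
  - intros a Ha. apply (mulgI a). rewrite mulKVg, mulA, Ha, mulgK; reflexivity.
Qed.

Lemma normalises_of_conj_finite M g : finite_set M ->
  (forall m, M m -> M (conj g m)) -> normalises g M.
Proof.
  intros FM gM. split; [exact gM|].
  destruct (finite_set_enum M FM) as [l [Nl Il]].
  assert (Onto : incl l (map (conj g) l)).
  { apply NoDup_length_incl.
    - apply NoDup_map_NoDup_ForallPairs; [|exact Nl]. intros a b _ _. apply conj_inj.
    - rewrite length_map; reflexivity.
    - intros x Ix. apply in_map_iff in Ix as [a [<- Ia]]. apply Il, gM, Il, Ia. }
  intros y My. apply Il, Onto, in_map_iff in My as [a [<- Ia]].
  exists a; split; [apply Il, Ia | reflexivity].
Qed.

(* M<g> = { m g^j } is a finite subgroup since conjugation by g preserves M. *)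
Lemma maximal_elliptic_finite_order_normaliser M g k :
  maximal_elliptic M -> (forall m, M m -> M (conj g m)) ->
  0 < k -> gpow g k = one -> M g.
Proof.
  intros [[[M1 [MM MV]] FM] Mmax] gM Hk Ek.
  assert (push : forall j m, M m -> exists m', M m' /\ mul (gpow g j) m = mul m' (gpow g j)).
  { induction j; intros m Mm.
    - exists m; split; [exact Mm|]. simpl; rewrite mul1g, mulg1; reflexivity.
    - destruct (IHj m Mm) as [m' [Mm' E]]. exists (conj g m'); split; [auto|].
      simpl. rewrite <- mulA, E, mulA. unfold conj. rewrite (mulA _ g), mulgKV; reflexivity. }
  set (MG := fun x => exists m j, M m /\ x = mul m (gpow g j)).
  assert (EMG : elliptic_subgroup MG).
  { split; [split; [|split]|].
    - exists one, 0. split; [exact M1|]. simpl; rewrite mul1g; reflexivity.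
    - intros a b [m1 [i [Mm1 ->]]] [m2 [j [Mm2 ->]]].
      destruct (push i m2 Mm2) as [m' [Mm' E]]. exists (mul m1 m'), (i + j). split; [auto|].
      rewrite expgD, <- (mulA m1), (mulA (gpow g i)), E, <- !mulA; reflexivity.
    - intros a [m [j [Mm ->]]]. rewrite invMg, (invg_expg g k j Hk Ek).
      destruct (push (j * (k - 1)) (inv m) (MV _ Mm)) as [m' [Mm' E]].
      exists m', (j * (k - 1)). split; assumption.
    - destruct (finite_set_enum M FM) as [l [_ Il]].
      exists (flat_map (fun m => map (fun j => mul m (gpow g j)) (seq 0 k)) l).
      intros x [m [j [Mm ->]]]. apply in_flat_map. exists m. split; [apply Il, Mm|].
      rewrite (expg_mod g k j Ek) by lia.
      apply (in_map (fun j => mul m (gpow g j))), in_seq.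
      pose proof (Nat.mod_upper_bound j k). lia. }
  apply (Mmax MG EMG).
  - intros x Mx. exists x, 0. split; [exact Mx|]. simpl; rewrite mulg1; reflexivity.
  - exists one, 1. split; [exact M1|]. simpl. rewrite mul1g, mulg1; reflexivity.
Qed.

End FiniteSubgroups.

Section WordMetric.
Context {G : group}.
Variable gs : list G.
Implicit Types (g x y z : G) (w : list G).

Definition letters : list G := gs ++ map inv gs.

Fixpoint words (n : nat) : list (list G) :=
  match n with
  | 0 => [nil]
  | S k => flat_map (fun w => map (fun a => a :: w) letters) (words k)
  end.

Definition ball (R : nat) : list G :=
  flat_map (fun n => map word_prod (words n)) (seq 0 (S R)).

Lemma in_words w : Forall (letter gs) w -> In w (words (length w)).
Proof.
  induction w as [|a w IH]; simpl; [auto|]. intro F. inversion F as [|? ? La Fw]; subst.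
  apply in_flat_map. exists w; split; [auto|]. apply in_map_iff. exists a; split; [reflexivity|].
  unfold letters. apply in_app_iff. destruct La as [?|[s [Hs ->]]]; [auto|].
  right; apply in_map, Hs.
Qed.

Lemma in_ball g n R : has_word_of_length gs g n -> n <= R -> In g (ball R).
Proof.
  intros [w [F [E L]]] HR. apply in_flat_map. exists n; split; [apply in_seq; lia|].
  apply in_map_iff. exists w; split; [exact E|]. subst n; apply in_words, F.
Qed.

Lemma word_prod_app w1 w2 : word_prod (w1 ++ w2) = mul (word_prod w1) (word_prod w2).
Proof. induction w1; simpl; [rewrite mul1g | rewrite IHw1, mulA]; reflexivity. Qed.

Lemma has_word_one : has_word_of_length gs one 0.
Proof. exists nil; repeat split; constructor. Qed.

Lemma has_word_mul g1 g2 n1 n2 : has_word_of_length gs g1 n1 -> has_word_of_length gs g2 n2 ->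
  has_word_of_length gs (mul g1 g2) (n1 + n2).
Proof.
  intros [w1 [F1 [E1 L1]]] [w2 [F2 [E2 L2]]]. exists (w1 ++ w2). repeat split.
  - apply Forall_app; split; assumption.
  - rewrite word_prod_app; subst; reflexivity.
  - rewrite length_app; subst; reflexivity.
Qed.

Lemma has_word_inv g n : has_word_of_length gs g n -> has_word_of_length gs (inv g) n.
Proof.
  intros [w [F [E L]]]. exists (rev (map inv w)). repeat split.
  - apply Forall_rev, Forall_map. eapply Forall_impl; [|exact F].
    intros a [Ha|[s [Hs ->]]]; [right; eauto | left; rewrite invgK; exact Hs].
  - subst g. clear. induction w as [|a w IH]; simpl; [symmetry; apply invg1|].
    rewrite word_prod_app, IH. simpl. rewrite mulg1, invMg; reflexivity.
  - rewrite length_rev, length_map; exact L.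
Qed.

Definition dist x y : nat := epsilon (inhabits 0) (word_dist gs x y).

Hypothesis gen_gs : generates G gs.

Lemma dist_spec x y : word_dist gs x y (dist x y).
Proof.
  unfold dist; apply epsilon_spec.
  destruct (gen_gs (mul (inv x) y)) as [n0 Hn0].
  destruct (nat_least _ n0 Hn0) as [n [Hn Hmin]].
  exists n; split; assumption.
Qed.

Lemma dist_word x y : has_word_of_length gs (mul (inv x) y) (dist x y).
Proof. apply (dist_spec x y). Qed.

Lemma dist_le x y n : has_word_of_length gs (mul (inv x) y) n -> dist x y <= n.
Proof. apply (dist_spec x y). Qed.

Lemma dist_transl x y x' y' : mul (inv x) y = mul (inv x') y' -> dist x y = dist x' y'.
Proof.
  intro E. apply Nat.le_antisymm; apply dist_le; [rewrite E | rewrite <- E]; apply dist_word.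
Qed.

Lemma dist1_inv_mul x y : dist one (mul (inv x) y) = dist x y.
Proof. apply dist_transl. rewrite invg1, mul1g; reflexivity. Qed.

Lemma dist_mul2l g x y : dist (mul g x) (mul g y) = dist x y.
Proof. apply dist_transl. rewrite invMg, <- mulA, mulKg; reflexivity. Qed.

Lemma dist_sym x y : dist x y = dist y x.
Proof.
  assert (Le : forall x y, dist x y <= dist y x).
  { intros a b. apply dist_le. replace (mul (inv a) b) with (inv (mul (inv b) a)).
    - apply has_word_inv, dist_word.
    - rewrite invMg, invgK; reflexivity. }
  apply Nat.le_antisymm; apply Le.
Qed.

Lemma dist_xx x : dist x x = 0.
Proof. apply Nat.le_0_r, dist_le. rewrite mulVg. apply has_word_one. Qed.

Lemma dist_triangle x y z : dist x z <= dist x y + dist y z.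
Proof.
  apply dist_le. replace (mul (inv x) z) with (mul (mul (inv x) y) (mul (inv y) z)).
  - apply has_word_mul; apply dist_word.
  - rewrite <- mulA, mulKVg; reflexivity.
Qed.

Lemma dist1_ball g R : dist one g <= R -> In g (ball R).
Proof.
  intro H. pose proof (dist_word one g) as W. rewrite invg1, mul1g in W.
  eapply in_ball; eassumption.
Qed.

(* The prefixes of a shortest word for [x^-1 y], translated by [x]. *)
Lemma geodesic x y : exists m : nat -> G, m 0 = x /\ m (dist x y) = y /\
  forall a b, a <= b <= dist x y -> dist (m a) (m b) = b - a.
Proof.
  destruct (dist_word x y) as [w [F [E L]]]. set (N := dist x y) in *.
  set (m := fun t : nat => mul x (word_prod (firstn t w))).
  assert (m0 : m 0 = x) by (unfold m; simpl; apply mulg1).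
  assert (mN : m N = y) by (unfold m; rewrite firstn_all2, E by lia; apply mulKVg).
  assert (Hub : forall a b, a <= b <= N -> dist (m a) (m b) <= b - a).
  { intros a b Hab. unfold m. rewrite dist_mul2l. apply dist_le.
    rewrite <- (firstn_skipn a (firstn b w)), firstn_firstn, skipn_firstn_comm, Nat.min_l,
      word_prod_app, mulKg by lia.
    exists (firstn (b - a) (skipn a w)). repeat split.
    - rewrite <- (firstn_skipn a w) in F. apply Forall_app in F as [_ F].
      rewrite <- (firstn_skipn (b - a) (skipn a w)) in F. apply Forall_app in F as [F _].
      exact F.
    - rewrite length_firstn, length_skipn. lia. }
  exists m. split; [exact m0|]. split; [exact mN|].
  intros a b Hab.
  pose proof (Hub 0 a ltac:(lia)). pose proof (Hub b N ltac:(lia)). pose proof (Hub a b Hab).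
  pose proof (dist_triangle (m 0) (m a) (m b)). pose proof (dist_triangle (m 0) (m b) (m N)).
  rewrite m0, mN in *. lia.
Qed.

End WordMetric.

Section Hyperbolic.
Context {G : group}.
Variable gs : list G.
Hypothesis gen_gs : generates G gs.
Variable delta : nat.
Hypothesis hyp : gromov_hyperbolic_metric G gs delta.
Notation d := (dist gs).
Implicit Types (c g m p q x y z : G) (K : G -> Prop).

Lemma dist_four_point x y z w :
  (Z.of_nat (d x w) + Z.of_nat (d y w) - Z.of_nat (d x y) + 2 * Z.of_nat delta >=
   Z.min (Z.of_nat (d x w) + Z.of_nat (d z w) - Z.of_nat (d x z))
         (Z.of_nat (d y w) + Z.of_nat (d z w) - Z.of_nat (d y z)))%Z.
Proof. apply (hyp x y z w); apply dist_spec, gen_gs. Qed.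

Lemma geodesic_point_thin p q m x : d p m + d m q = d p q ->
  d x m + d p m <= d x p + 2 * delta \/ d x m + d m q <= d x q + 2 * delta.
Proof.
  intro E. pose proof (dist_four_point p q x m) as F.
  rewrite (dist_sym gs gen_gs q m), (dist_sym gs gen_gs p x), (dist_sym gs gen_gs q x) in F.
  lia.
Qed.

(* Take a smallest ball B(c, r) containing K.  For h in K the ball B(hc, r) also
   contains K, and if d(c, hc) > 4 delta + 1 the midpoint of a geodesic from c to hc
   would be the centre of a ball of radius r - 1 containing K. *)
Lemma elliptic_quasi_centre K : elliptic_subgroup K ->
  exists c, forall x, K x -> d c (mul x c) <= 4 * delta + 1.
Proof.
  intros [[K1 [KM KV]] [l Hl]].
  destruct (nat_least (fun r => exists p, forall x, K x -> d p x <= r)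
              (list_sum (map (d one) l))) as [r [[c Hc] Hmin]].
  { exists one. intros x Kx. apply Hl in Kx. clear - Kx. induction l as [|a l IH]; simpl in *.
    - contradiction.
    - destruct Kx as [<- | I]; [lia | specialize (IH I); lia]. }
  exists c. intros h Kh.
  assert (Hc' : forall x, K x -> d (mul h c) x <= r).
  { intros x Kx. rewrite <- (mulKVg h x), dist_mul2l by exact gen_gs.
    apply Hc, KM; [apply KV, Kh | exact Kx]. }
  destruct (geodesic gs gen_gs c (mul h c)) as [m [m0 [mD Hm]]].
  set (D := d c (mul h c)) in *.
  assert (Half : D / 2 <= 2 * delta).
  { apply Nat.nlt_ge. intro Far.
    assert (Closer : forall x, K x -> d (m (D / 2)) x + 1 <= r).
    { intros x Kx. pose proof (Hc x Kx). pose proof (Hc' x Kx).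
      pose proof (Hm 0 (D / 2)). pose proof (Hm (D / 2) D). pose proof (Hm 0 D).
      pose proof (Nat.div_mod D 2). pose proof (Nat.mod_upper_bound D 2).
      rewrite m0, mD in *.
      rewrite (dist_sym gs gen_gs c x), (dist_sym gs gen_gs (mul h c) x),
        (dist_sym gs gen_gs _ x) in *.
      destruct (geodesic_point_thin c (mul h c) (m (D / 2)) x); lia. }
    pose proof (Closer one K1).
    assert (r <= r - 1); [|lia].
    apply Hmin. exists (m (D / 2)). intros x Kx. specialize (Closer x Kx). lia. }
  pose proof (Nat.div_mod D 2). pose proof (Nat.mod_upper_bound D 2). lia.
Qed.

Lemma elliptic_card_le K l : elliptic_subgroup K -> NoDup l -> (forall x, In x l -> K x) ->
  length l <= length (ball gs (4 * delta + 1)).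
Proof.
  intros EK Nl Hl. destruct (elliptic_quasi_centre K EK) as [c Hc].
  rewrite <- (length_map (fun x => mul (inv c) (mul x c))).
  apply NoDup_incl_length.
  - apply NoDup_map_NoDup_ForallPairs; [|exact Nl].
    intros a b _ _ E. apply mulgI, mulIg in E; exact E.
  - intros y Hy. apply in_map_iff in Hy as [x [<- Ix]].
    apply (dist1_ball gs gen_gs).
    rewrite dist1_inv_mul by exact gen_gs. apply Hc, Hl, Ix.
Qed.

Lemma elliptic_sub_maximal H : elliptic_subgroup H ->
  exists M, maximal_elliptic M /\ forall x, H x -> M x.
Proof.
  intro EH.
  set (Q := fun n => exists K, elliptic_subgroup K /\ (forall x, H x -> K x) /\
              exists l, NoDup l /\ length l = n /\ forall x, In x l -> K x).
  destruct (nat_greatest Q (length (ball gs (4 * delta + 1))) 0) as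
    [n [[K [EK [HK [l [Nl [Ln Kl]]]]]] Hmax]].
  - intros n [K [EK [_ [l [Nl [<- Kl]]]]]]. eapply elliptic_card_le; eassumption.
  - exists H. split; [exact EH|]. split; [auto|].
    exists nil. split; [constructor|]. split; [reflexivity | intros x []].
  - exists K. split; [|exact HK]. split; [exact EK|].
    intros K' EK' KK' x K'x. apply NNPP. intro nKx.
    assert (S n <= n); [|lia]. apply Hmax. exists K'. split; [exact EK'|]. split; [auto|].
    exists (x :: l). split; [|split].
    + constructor; [intro I; apply nKx, Kl, I | exact Nl].
    + simpl; congruence.
    + intros y [<- | I]; auto.
Qed.

(* The points p n = z^n x form a local geodesic: by the four-point condition each
   step moves at least D2 - l - 2 delta >= 1 further away from x. *)
Lemma loxodromic_of_displacement z x :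
  d x (mul z x) + 2 * delta + 1 <= d x (mul z (mul z x)) -> loxodromic z.
Proof.
  intro Hc.
  set (p := fun n => mul (gpow z n) x).
  assert (pS : forall n, p (S n) = mul z (p n))
    by (intro n; unfold p; simpl; rewrite mulA; reflexivity).
  assert (p0 : p 0 = x) by (unfold p; simpl; apply mul1g).
  assert (p2 : p 2 = mul z (mul z x)) by (rewrite !pS, p0; reflexivity).
  assert (Hsh : forall n k, d (p (S n)) (p (S k)) = d (p n) (p k))
    by (intros n k; rewrite (pS n), (pS k), dist_mul2l by exact gen_gs; reflexivity).
  set (l := d x (mul z x)). set (D2 := d x (mul z (mul z x))) in *.
  assert (Hstep : forall n, d (p n) (p (S n)) = l).
  { induction n; [rewrite pS, p0; reflexivity | rewrite Hsh; exact IHn]. }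
  assert (Htwo : forall n, d (p n) (p (S (S n))) = D2).
  { induction n; [rewrite p0, p2; reflexivity | rewrite Hsh; exact IHn]. }
  assert (HD2 : D2 <= l + l).
  { pose proof (dist_triangle gs gen_gs x (mul z x) (mul z (mul z x))) as T.
    rewrite (dist_mul2l gs gen_gs z x (mul z x)) in T. exact T. }
  assert (Hinc : forall n, d (p 0) (p n) + 1 <= d (p 0) (p (S n)) /\
                   (Z.of_nat (d (p O) (p (S n))) - Z.of_nat (d (p O) (p n)) >=
                    Z.of_nat D2 - Z.of_nat l - 2 * Z.of_nat delta)%Z).
  { induction n as [|n [_ IH]].
    - rewrite (dist_xx gs gen_gs). pose proof (Hstep 0). split; lia.
    - pose proof (dist_four_point (p n) (p (S (S n))) (p 0) (p (S n))) as F.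
      pose proof (Hstep n). pose proof (Hstep (S n)). pose proof (Htwo n).
      rewrite (dist_sym gs gen_gs (p (S (S n))) (p (S n))), (dist_sym gs gen_gs (p n) (p 0)),
        (dist_sym gs gen_gs (p (S (S n))) (p 0)) in F.
      split; lia. }
  intros n Hn E.
  assert (Grow : n <= d (p 0) (p n)).
  { clear E Hn. induction n; [lia|]. pose proof (proj1 (Hinc n)). lia. }
  assert (pn : p n = x) by (unfold p; rewrite E, mul1g; reflexivity).
  rewrite pn, p0, (dist_xx gs gen_gs) in Grow. lia.
Qed.

Lemma geodesic_displacement_le y p q (m : nat -> G) :
  m 0 = p -> m (d p q) = q -> (forall a b, a <= b <= d p q -> d (m a) (m b) = b - a) ->
  forall t, t <= d p q ->
  d (m t) (mul y (m t)) <= Nat.max (d p (mul y p)) (d q (mul y q)) + 2 * delta.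
Proof.
  intros m0 mN Hm t Ht.
  assert (A1 : d p (m t) = t) by (rewrite <- m0, Hm; lia).
  assert (A2 : d (m t) q = d p q - t) by (rewrite <- mN at 1; apply Hm; lia).
  assert (Sh : forall u, d (mul y (m t)) (mul y u) = d (m t) u)
    by (intro u; apply (dist_mul2l gs gen_gs)).
  pose proof (dist_triangle gs gen_gs (mul y (m t)) (mul y p) p).
  pose proof (dist_triangle gs gen_gs (mul y (m t)) (mul y q) q).
  rewrite !Sh, (dist_sym gs gen_gs (m t) p), (dist_sym gs gen_gs (mul y p) p),
    (dist_sym gs gen_gs (mul y q) q) in *.
  rewrite (dist_sym gs gen_gs (m t)).
  destruct (geodesic_point_thin p q (m t) (mul y (m t))); lia.
Qed.

(* z := m j (m i)^-1 commutes with y and maps m i, m (i + K) to m j, m (j + K), so it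
   translates along the geodesic by j - i > 4 delta. *)
Lemma loxodromic_of_geodesic_repeat y (m : nat -> G) N i j :
  (forall a b, a <= b <= N -> d (m a) (m b) = b - a) ->
  i + (4 * delta + 1) <= j -> j + (delta + 1) <= N ->
  mul (inv (m i)) (mul y (m i)) = mul (inv (m j)) (mul y (m j)) ->
  mul (inv (m i)) (m (i + (delta + 1))) = mul (inv (m j)) (m (j + (delta + 1))) ->
  exists z, centraliser y z /\ loxodromic z.
Proof.
  intros Hm Hij HjN Hu Hv. set (K := delta + 1) in *.
  set (z := mul (m j) (inv (m i))).
  assert (zi : mul z (m i) = m j) by apply mulgKV.
  assert (zK : mul z (m (i + K)) = m (j + K))
    by (rewrite <- (mulKVg (m i) (m (i + K))), mulA, zi, Hv, mulKVg; reflexivity).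
  exists z. split.
  - apply (mulIg (m i)). unfold z, centraliser. rewrite <- !mulA, mulVg, mulg1, Hu, mulKVg.
    reflexivity.
  - apply (loxodromic_of_displacement z (m i)). rewrite zi.
    assert (E1 : d (mul z (m j)) (m j) = j - i).
    { rewrite <- zi at 2. rewrite dist_mul2l, dist_sym by exact gen_gs. apply Hm; lia. }
    assert (E2 : d (m (j + K)) (mul z (m j)) = j - i - K).
    { rewrite <- zK, dist_mul2l by exact gen_gs. rewrite Hm; lia. }
    pose proof (dist_four_point (m i) (m (j + K)) (mul z (m j)) (m j)) as F.
    rewrite (Hm i j), (dist_sym gs gen_gs (m (j + K)) (m j)), (Hm j (j + K)), (Hm i (j + K)),
      E1, E2 in F by lia.
    rewrite (Hm i j) by lia. lia.
Qed.

(* Along a geodesic from 1 to a far element c of C(y), y moves every point by at most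
   d(1, y) + 2 delta, so the pairs ((m t)^-1 y (m t), (m t)^-1 m (t + K)) range over a
   finite set; by pigeonhole two well separated points m i, m j give the same pair. *)
Lemma infinite_centraliser_loxodromic y : ~ finite_set (centraliser y) ->
  exists z, centraliser y z /\ loxodromic z.
Proof.
  intro NF.
  set (D0 := d one y). set (K := delta + 1). set (T := 4 * delta + 1).
  set (Box := list_prod (ball gs (D0 + 2 * delta)) (ball gs K)).
  set (B := length Box).
  assert (Far : exists c, centraliser y c /\ B * T + K < d one c).
  { apply NNPP. intro Near. apply NF. exists (ball gs (B * T + K)). intros c Cc.
    apply (dist1_ball gs gen_gs), Nat.nlt_ge. intro. apply Near. eauto. }
  destruct Far as [c [Cc Nc]].
  destruct (geodesic gs gen_gs one c) as [m [m0 [mN Hm]]].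
  assert (Disp : forall t, t <= d one c -> d (m t) (mul y (m t)) <= D0 + 2 * delta).
  { intros t Ht. pose proof (geodesic_displacement_le y one c m m0 mN Hm t Ht) as Dt.
    rewrite mulg1 in Dt. unfold centraliser in Cc. rewrite <- Cc, <- (mulg1 c) in Dt at 1.
    rewrite dist_mul2l in Dt by exact gen_gs. fold D0 in Dt. lia. }
  set (f := fun k => (mul (inv (m (k * T))) (mul y (m (k * T))),
                      mul (inv (m (k * T))) (m (k * T + K)))).
  destruct (pigeonhole_nat f Box B) as [i [j [Hij E]]]; [lia| |].
  - intros k Hk. assert (k * T <= B * T) by (apply Nat.mul_le_mono_r; exact Hk).
    apply in_prod; apply (dist1_ball gs gen_gs); rewrite dist1_inv_mul by exact gen_gs.
    + apply Disp. lia.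
    + rewrite Hm; lia.
  - injection E as Eu Ev.
    assert (S i * T <= j * T) by (apply Nat.mul_le_mono_r; lia).
    assert (j * T <= B * T) by (apply Nat.mul_le_mono_r; lia).
    apply (loxodromic_of_geodesic_repeat y m (d one c) (i * T) (j * T)); auto; simpl in *; lia.
Qed.

End Hyperbolic.

Section Malnormality.
Context {G : group}.
Implicit Types (H M : G -> Prop) (g y : G).

Lemma no_loxodromic_normaliser_of_malnormal :
  (forall H, elliptic_subgroup H -> exists M, maximal_elliptic M /\ forall x, H x -> M x) ->
  (forall H, maximal_elliptic H -> malnormal H) ->
  forall H, elliptic_subgroup H -> nontrivial H -> forall g, loxodromic g -> ~ normalises g H.
Proof.
  intros Hsub Hmal H EH [h [Hh h1]] g Lg [gH _].
  destruct (Hsub H EH) as [M [MM HM]].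
  assert (Mg : ~ M g) by (intro Mg; exact (elliptic_not_loxodromic M g (proj1 MM) Mg Lg)).
  apply h1, (conj_eq1 g), (Hmal M MM g Mg _ (HM _ (gH h Hh))).
  exists h; split; [apply HM, Hh | reflexivity].
Qed.

Section NoLoxodromicNormaliser.
Hypothesis elliptic_abelian : forall H, elliptic_subgroup H -> abelian_set H.
Hypothesis centraliser_loxodromic : forall y, ~ finite_set (centraliser y) ->
  exists z, centraliser y z /\ loxodromic z.
Hypothesis no_lox_normaliser : forall H, elliptic_subgroup H -> nontrivial H ->
  forall g, loxodromic g -> ~ normalises g H.

(* A loxodromic element commuting with y normalises the finite group <y>. *)
Lemma centraliser_elliptic y n : y <> one -> 0 < n -> gpow y n = one ->
  elliptic_subgroup (centraliser y).
Proof.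
  intros y1 Hn E. split; [apply centraliser_subgroup|]. apply NNPP. intro NF.
  destruct (centraliser_loxodromic y NF) as [z [Cz Lz]].
  assert (Fix : forall x, (exists k, x = gpow y k) -> conj z x = x).
  { intros x [k ->]. unfold conj. rewrite commute_expg, mulgK by exact Cz. reflexivity. }
  apply (no_lox_normaliser _ (cyclic_elliptic y n Hn E)) with (g := z); [| exact Lz |].
  - exists y; split; [exists 1; simpl; rewrite mulg1; reflexivity | exact y1].
  - split; [intros x Hx; rewrite Fix; exact Hx |].
    intros x Hx. exists x; split; [exact Hx | symmetry; apply Fix, Hx].
Qed.

(* M is the centraliser of y, and conjugation by g maps M into the centraliser of
   conj g h = y; so g normalises M and cannot lie outside it. *)
Lemma malnormal_of_no_loxodromic_normaliser M : maximal_elliptic M -> malnormal M.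
Proof.
  intros MM g Mg y My [h [Mh Ey]]. pose proof MM as [EM Mmax].
  apply NNPP. intro y1.
  destruct (not_loxodromic_order y (elliptic_not_loxodromic M y EM My)) as [n [Hn En]].
  pose proof (centraliser_elliptic y n y1 Hn En) as ECy.
  assert (CyM : forall x, centraliser y x -> M x).
  { apply Mmax; [exact ECy|]. intros x Mx. apply (elliptic_abelian M EM); assumption. }
  assert (gM : forall m, M m -> M (conj g m)).
  { intros m Mm. apply CyM. unfold centraliser. rewrite Ey, !conjM.
    f_equal. apply (elliptic_abelian M EM); assumption. }
  destruct (classic (loxodromic g)) as [Lg | NLg].
  - apply (no_lox_normaliser M EM ltac:(exists y; split; assumption) g Lg).
    exact (normalises_of_conj_finite M g (proj2 EM) gM).
  - destruct (not_loxodromic_order g NLg) as [k [Hk Ek]].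
    exact (Mg (maximal_elliptic_finite_order_normaliser M g k MM gM Hk Ek)).
Qed.

End NoLoxodromicNormaliser.
End Malnormality.

Theorem lemma3p11 (G : group) :
  hyperbolic_group G ->
  (forall H : G -> Prop, elliptic_subgroup H -> abelian_set H) ->
  ((forall H : G -> Prop, maximal_elliptic H -> malnormal H) <->
   (forall H : G -> Prop, elliptic_subgroup H -> nontrivial H ->
      forall g : G, loxodromic g -> ~ normalises g H)).
Proof.
  intros [gs [delta [gen_gs hyp]]] elliptic_abelian. split.
  - apply no_loxodromic_normaliser_of_malnormal.
    exact (elliptic_sub_maximal gs gen_gs delta hyp).
  - intro no_lox_normaliser.
    exact (malnormal_of_no_loxodromic_normaliser elliptic_abelian
             (infinite_centraliser_loxodromic gs gen_gs delta hyp) no_lox_normaliser).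
Qed.
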